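(* Let $\mathcal F$ be the class of all functions $\mathbb R^p\to\mathbb R^d$ representable by binary trees of depth at most $D$ in which every internal node queries ''$x_k\le\theta$?'' for some coordinate $k$ and some threshold $\theta\in\{1/\ell,\dots,1-1/\ell\}$ (going left if true, right otherwise), and every leaf assigns an arbitrary output $v\in\mathbb R^d$. Suppose $f^*\in\mathcal F$, $X\in[0,1]^p$, and $X$ has a density bounded below by $\mu_{\min}>0$ on $[0,1]^p$. Then there exists $\kappa$ such that for all $f\in\mathcal F$ and almost all $x$, $$\|f(x)-f^*(x)\|^2\le\kappa\,\mathbb E_X\|f(X)-f^*(X)\|^2.$$
   Context: $X\in\mathbb R^p$ is a random vector, $Y\in\mathbb R^d$ with $\|Y\|\le1$, and $f^*(x)=\mathbb E[Y\mid X=x]$; $\mathbb E_X$ is expectation over $X$; $\ell\ge2$ and $D\ge1$ are fixed integers. *)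

From HB Require Import structures.
From mathcomp Require Import all_boot all_order all_algebra.
From mathcomp Require Import all_classical all_reals all_analysis.
Set Implicit Arguments. Unset Strict Implicit. Unset Printing Implicit Defensive.
Import Order.TTheory GRing.Theory Num.Theory.
Local Open Scope ring_scope.
Local Open Scope classical_set_scope.

(* Binary decision trees: internal node (Node k j L R) queries
   "x_k <= j/l ?" and goes to L if true, R otherwise; leaves carry v in R^d. *)
Inductive dtree (R : Type) (p d : nat) : Type :=
  | Leaf of 'rV[R]_d
  | Node of 'I_p & nat & dtree R p d & dtree R p d.
Arguments Leaf {R p d}.
Arguments Node {R p d}.

Fixpoint tdepth {R : Type} {p d : nat} (t : dtree R p d) : nat :=
  match t with
  | Leaf _ => 0
  | Node _ _ tl tr => (maxn (tdepth tl) (tdepth tr)).+1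
  end.

Fixpoint tvalid {R : Type} {p d : nat} (l : nat) (t : dtree R p d) : Prop :=
  match t with
  | Leaf _ => True
  | Node _ j tl tr => (0 < j < l)%N /\ tvalid l tl /\ tvalid l tr
  end.

Fixpoint teval {R : realType} {p d : nat} (l : nat) (t : dtree R p d)
    (x : p.-tuple R) : 'rV[R]_d :=
  match t with
  | Leaf v => v
  | Node k j tl tr =>
      if tnth x k <= j%:R / l%:R then teval l tl x else teval l tr x
  end.

Definition tree_class (R : realType) (p d l D : nat)
    (f : p.-tuple R -> 'rV[R]_d) : Prop :=
  exists t : dtree R p d, tvalid l t /\ (tdepth t <= D)%N /\ f = teval l t.

Definition sqnorm (R : realType) (d : nat) (v : 'rV[R]_d) : R :=
  \sum_(i < d) (v ord0 i) ^+ 2.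

Definition unit_cube (R : realType) (p : nat) : set (p.-tuple R) :=
  [set x | forall k : 'I_p, 0 <= tnth x k <= 1].

Definition box (R : realType) (p : nat) (a b : 'I_p -> R) : set (p.-tuple R) :=
  [set x | forall k : 'I_p, a k <= tnth x k <= b k].

(* lam is (the Borel restriction of) Lebesgue measure on R^p: it gives every
   box its volume (this determines lam uniquely on the product sigma-algebra) *)
Definition is_lebesgue_measure (R : realType) (p : nat)
    (lam : {measure set (p.-tuple R) -> \bar R}) : Prop :=
  forall a b : 'I_p -> R, (forall k, a k <= b k) ->
    lam (box a b) = (\prod_(k < p) (b k - a k))%:E.

Definition is_cond_exp d (Omega : measurableType d) (R : realType) (p dd : nat)
    (P : probability Omega R) (X : Omega -> p.-tuple R) (Y : Omega -> 'rV[R]_dd)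
    (fstar : p.-tuple R -> 'rV[R]_dd) : Prop :=
  (forall i : 'I_dd, measurable_fun [set: p.-tuple R] (fun x => fstar x ord0 i)) /\
  (forall i : 'I_dd, P.-integrable [set: Omega] (fun w => (fstar (X w) ord0 i)%:E)) /\
  forall A : set (p.-tuple R), measurable A -> forall i : 'I_dd,
    (\int[P]_(w in X @^-1` A) (Y w ord0 i)%:E =
     \int[P]_(w in X @^-1` A) (fstar (X w) ord0 i)%:E)%E.

From HB Require Import structures.
From mathcomp Require Import all_boot all_order all_algebra.
From mathcomp Require Import all_classical all_reals all_analysis.
From mathcomp Require Import lra ring.
Import Order.TTheory GRing.Theory Num.Theory.
Local Open Scope ring_scope.
Local Open Scope classical_set_scope.
Set Implicit Arguments. Unset Strict Implicit.

(** All thresholds lie on the grid [1/l, ..., (l-1)/l], so every point [x],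
    inside the cube or not, has a box of side [1/(2l)] inside [[0,1]^p] on
    which every query "[y_k <= j/l]" is answered as at [x]. Hence
    [|f - f*|^2] is constant on that box, whose probability is at least
    [m = mu_min (2l)^-p], and [|f(x) - f*(x)|^2 m <= E|f(X) - f*(X)|^2] at
    every [x]: [kappa = 1/m] works surely, not just almost surely. *)

Lemma sqnorm_ge0 (R : realType) (d : nat) (v : 'rV[R]_d) : 0 <= sqnorm v.
Proof. by rewrite sumr_ge0 // => i _; exact: sqr_ge0. Qed.

Lemma measurable_sqnorm (R : realType) (dT : measure_display)
    (T : measurableType dT) (d : nat) (f : T -> 'rV[R]_d) :
  (forall i, measurable_fun [set: T] (fun y => f y ord0 i)) ->
  measurable_fun [set: T] (fun y => sqnorm (f y)).
Proof.
move=> mf; apply: measurable_sum => i.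
exact: measurable_realfun.measurable_funX.
Qed.

Section DecisionTrees.
Variables (R : realType) (p d l : nat).

Lemma teval_eq_queries (t : dtree R p d) (x y : p.-tuple R) :
  tvalid l t ->
  (forall k (j : nat), (0 < j < l)%N ->
     (tnth x k <= j%:R / l%:R) = (tnth y k <= j%:R / l%:R)) ->
  teval l t x = teval l t y.
Proof.
move=> + Hq; elim: t => [v|k j tl IHl tr IHr] //= [hj [vl vr]].
by rewrite Hq // IHl // IHr.
Qed.

Lemma measurable_teval (t : dtree R p d) (i : 'I_d) :
  measurable_fun [set: p.-tuple R] (fun y => teval l t y ord0 i).
Proof.
elim: t => [v|k j tl IHl tr IHr] /=; first exact: measurable_cst.
rewrite (_ : (fun y => _) = (fun y => if tnth y k <= j%:R / l%:R
   then teval l tl y ord0 i else teval l tr y ord0 i)); last first.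
  by apply: funext => y; case: ifP.
apply: measurable_fun_ifT => //.
apply: measurable_realfun.measurable_fun_ler; first exact: measurable_tnth.
exact: measurable_cst.
Qed.

Lemma measurable_sqnorm_teval_sub (t t' : dtree R p d) :
  measurable_fun [set: p.-tuple R] (fun y => sqnorm (teval l t y - teval l t' y)).
Proof.
apply: measurable_sqnorm => i.
rewrite (_ : (fun y => _) = (fun y => teval l t y ord0 i - teval l t' y ord0 i)).
  by apply: measurable_realfun.measurable_funB; exact: measurable_teval.
by apply: funext => y; rewrite !mxE.
Qed.

End DecisionTrees.

Lemma measurable_box (R : realType) (p : nat) (a b : 'I_p -> R) :
  measurable (box a b).
Proof.
rewrite (_ : box a b = \bigcap_(k in [set: 'I_p])
    ((fun y => tnth y k) @^-1` [set` Interval (BLeft (a k)) (BRight (b k))])).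
  apply: fin_bigcap_measurable; first exact: finite_finset.
  move=> k _; rewrite -[X in measurable X]setTI.
  by apply: (@measurable_tnth _ R p k measurableT); exact: measurable_itv.
apply/seteqP; split => y /=.
  by move=> By k _ /=; rewrite in_itv /=; exact: (By k).
by move=> Hy k; have := Hy k I; rewrite /= in_itv.
Qed.

Section MeasureBounds.
Variables (R : realType) (dT : measure_display) (T : measurableType dT).
Variable mu : {measure set T -> \bar R}.

Lemma integral_ge_lb (g : T -> R) (A : set T) (m : R) :
  measurable A -> measurable_fun A g -> 0 <= m ->
  (forall x, A x -> m <= g x) ->
  (m%:E * mu A <= \int[mu]_(x in A) (g x)%:E)%E.
Proof.
move=> mA mg m0 glb; rewrite -(integral_cst mu mA).
apply: ge0_le_integral => //; first exact/measurable_realfun.measurable_EFinP.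
Qed.

Lemma integral_ge_const_on (h : T -> R) (B : set T) (c : R) :
  measurable B -> measurable_fun [set: T] h -> (forall x, 0 <= h x) ->
  (forall x, B x -> h x = c) ->
  (c%:E * mu B <= \int[mu]_x (h x)%:E)%E.
Proof.
move=> mB mh h0 hB.
apply: (@le_trans _ _ (\int[mu]_(x in B) (h x)%:E)%E); last first.
  apply: ge0_subset_integral => //; first exact/measurable_realfun.measurable_EFinP.
  by move=> x _; rewrite lee_fin.
rewrite (eq_integral (cst c%:E)) ?integral_cst // => x.
by rewrite inE => /hB /= ->.
Qed.

End MeasureBounds.

Section Cells.
Variables (R : realType) (l : nat).
Hypothesis l_gt0 : (0 < l)%N.

Lemma exists_query_cell (r : R) : exists j : nat, (0 < j <= l)%N /\
  forall i : nat, (0 < i < l)%N -> (r <= i%:R / l%:R) = (j <= i)%N.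
Proof.
have ex : exists j, (0 < j)%N && ((r <= j%:R / l%:R) || (j == l)).
  by exists l; rewrite l_gt0 eqxx orbT.
case: (ex_minnP ex) => j /andP[j0 hj] jmin.
exists j; split; first by rewrite j0 /= jmin // l_gt0 eqxx orbT.
move=> i /andP[i0 il]; case: (leqP j i) => ji.
- case/orP: hj => [rj|/eqP jl]; last by move: il; rewrite -jl ltnNge ji.
  by apply: le_trans rj _; rewrite ler_wpM2r ?invr_ge0 ?ler0n ?ler_nat.
- apply/negbTE/negP => ri.
  by have := jmin i; rewrite i0 ri leqNgt ji => /(_ isT).
Qed.

(* A closed box inside the half-open grid cell [((J-1)/l, J/l]], on which the
   queries cannot flip. *)
Definition cell_box (p : nat) (J : 'I_p -> nat) : set (p.-tuple R) :=
  box (fun k => ((J k)%:R - 2^-1) / l%:R) (fun k => (J k)%:R / l%:R).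

Lemma cell_box_query (p : nat) (J : 'I_p -> nat) (y : p.-tuple R) k (i : nat) :
  cell_box J y -> (0 < i)%N -> (tnth y k <= i%:R / l%:R) = (J k <= i)%N.
Proof.
move=> /(_ k) /andP[ay yb] i0.
have il : 0 < (l%:R : R)^-1 by rewrite invr_gt0 ltr0n.
case: (leqP (J k) i) => ji.
  by apply: le_trans yb _; rewrite ler_wpM2r ?ler_nat // ltW.
apply/negbTE; rewrite -ltNge; apply: lt_le_trans ay; rewrite ltr_pM2r //.
have : (i.+1%:R : R) <= (J k)%:R by rewrite ler_nat.
rewrite -natr1; lra.
Qed.

Lemma exists_cell_box (p : nat) (x : p.-tuple R) :
  exists J : 'I_p -> nat, (forall k, 0 < J k <= l)%N /\
    forall y, cell_box J y -> forall k (j : nat), (0 < j < l)%N ->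
      (tnth x k <= j%:R / l%:R) = (tnth y k <= j%:R / l%:R).
Proof.
have [J HJ] := choice (fun k : 'I_p => exists_query_cell (tnth x k)).
exists J; split=> [k|y By k j /andP[j0 jl]]; first by case: (HJ k).
by have [_ ->] := HJ k; rewrite ?j0 ?jl // (cell_box_query _ By j0).
Qed.

Lemma cell_box_sub_unit_cube (p : nat) (J : 'I_p -> nat) :
  (forall k, 0 < J k <= l)%N -> cell_box J `<=` @unit_cube R p.
Proof.
move=> HJ y By k; have /andP[j0 jl] := HJ k; have /andP[ay yb] := By k.
apply/andP; split.
  apply: le_trans ay; rewrite divr_ge0 // ?ler0n //.
  have : (1 : R) <= (J k)%:R by rewrite ler1n.
  lra.
by apply: le_trans yb _; rewrite ler_pdivrMr ?ltr0n // mul1r ler_nat.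
Qed.

Lemma lebesgue_cell_box (p : nat) (lam : {measure set (p.-tuple R) -> \bar R})
    (J : 'I_p -> nat) :
  is_lebesgue_measure lam -> lam (cell_box J) = ((2^-1 / l%:R) ^+ p)%:E.
Proof.
have lR : (l%:R : R) != 0 by rewrite pnatr_eq0 -lt0n.
move=> ->; last by move=> k; rewrite ler_wpM2r ?invr_ge0 ?ler0n //; lra.
congr (_%:E); rewrite (eq_bigr (fun=> 2^-1 / l%:R)) ?prodr_const ?card_ord //.
by move=> k _; field.
Qed.

End Cells.

Lemma prob_cell_box_ge (R : realType) (p l : nat) (dO : measure_display)
    (Omega : measurableType dO) (P : {measure set Omega -> \bar R})
    (X : Omega -> p.-tuple R) (lam : {measure set (p.-tuple R) -> \bar R})
    (mu_min : R) (g : p.-tuple R -> R) (J : 'I_p -> nat) :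
  (0 < l)%N -> is_lebesgue_measure lam -> 0 <= mu_min ->
  measurable_fun [set: p.-tuple R] g ->
  (forall x, @unit_cube R p x -> mu_min <= g x) ->
  (forall A, measurable A -> P (X @^-1` A) = (\int[lam]_(x in A) (g x)%:E)%E) ->
  (forall k, 0 < J k <= l)%N ->
  ((mu_min * (2^-1 / l%:R) ^+ p)%:E <= P (X @^-1` cell_box l J))%E.
Proof.
move=> l0 hlam mu0 mg g_lb hdens HJ.
rewrite hdens; last exact: measurable_box.
rewrite EFinM -(lebesgue_cell_box l0 J hlam).
apply: integral_ge_lb => //; first exact: measurable_box.
  exact: measurable_funTS.
by move=> y /(cell_box_sub_unit_cube l0 HJ); exact: g_lb.
Qed.

Theorem proposition2 (R : realType) (p d l D : nat)
  (hl : (2 <= l)%N) (hD : (1 <= D)%N)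
  (dO : measure_display) (Omega : measurableType dO) (P : probability Omega R)
  (X : Omega -> p.-tuple R) (mX : measurable_fun [set: Omega] X)
  (Y : Omega -> 'rV[R]_d)
  (mY : forall i : 'I_d, measurable_fun [set: Omega] (fun w => Y w ord0 i))
  (hY : forall w, sqnorm (Y w) <= 1)
  (fstar : p.-tuple R -> 'rV[R]_d)
  (hfstar : is_cond_exp P X Y fstar)
  (hFstar : tree_class l D fstar)
  (hXcube : P (X @^-1` @unit_cube R p) = 1%E)
  (lam : {measure set (p.-tuple R) -> \bar R}) (hlam : is_lebesgue_measure lam)
  (mu_min : R) (hmu : 0 < mu_min)
  (g : p.-tuple R -> R) (mg : measurable_fun [set: p.-tuple R] g)
  (g_ge0 : forall x, 0 <= g x)
  (g_lb : forall x, @unit_cube R p x -> mu_min <= g x)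
  (hdens : forall A : set (p.-tuple R), measurable A ->
     P (X @^-1` A) = (\int[lam]_(x in A) (g x)%:E)%E) :
  exists kappa : R, forall f : p.-tuple R -> 'rV[R]_d, tree_class l D f ->
    {ae P, forall w,
      ((sqnorm (f (X w) - fstar (X w)))%:E <=
       kappa%:E * \int[P]_w' (sqnorm (f (X w') - fstar (X w')))%:E)%E}.
Proof.
have l0 : (0 < l)%N by apply: leq_trans hl.
set m := mu_min * (2^-1 / l%:R) ^+ p.
have m0 : 0 < m by rewrite mulr_gt0 // exprn_gt0 // divr_gt0 ?ltr0n.
exists m^-1 => f [t [tv [_ ->]]]; have [ts [tsv [_ ->]]] := hFstar.
apply: aeW => w; rewrite lee_pdivlMl //.
pose h y := sqnorm (teval l t y - teval l ts y).
have [J [HJ Hq]] := exists_cell_box l0 (X w).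
have h_cell w' : (X @^-1` cell_box l J) w' -> (h \o X) w' = h (X w).
  by move=> /Hq Hq'; rewrite /= /h (teval_eq_queries tv Hq') (teval_eq_queries tsv Hq').
have mB : measurable (X @^-1` cell_box l J).
  by rewrite -[B in measurable B]setTI; apply: mX => //; exact: measurable_box.
have mhX : measurable_fun [set: Omega] (h \o X).
  exact: measurableT_comp (measurable_sqnorm_teval_sub _ _ _) mX.
have hX0 w' : 0 <= (h \o X) w' by exact: sqnorm_ge0.
apply: le_trans (integral_ge_const_on P mB mhX hX0 h_cell).
rewrite muleC; apply: lee_wpmul2l; first by rewrite lee_fin sqnorm_ge0.
exact: prob_cell_box_ge (ltW hmu) mg g_lb hdens HJ.
Qed.
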